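(* Let $0<a<b$ and let $\mu$ be the positive measure on $[0,+\infty[$ defined by $\int f\,d\mu=\frac1{2\pi}\int_a^b f(t)\sqrt{(t-a)(b-t)}\,\frac{dt}t$. Then $$\frac1{2\pi}\int_a^b\sqrt{(t-a)(b-t)}\frac{dt}t=\frac14(\sqrt b-\sqrt a)^2,\qquad \lim_{x\to+\infty}\Big(U^\mu(x)+\frac14(\sqrt b-\sqrt a)^2\log x\Big)=0,$$ and for all $x\ge b$, $$U^\mu(x)=-\frac12\big(x-\sqrt{ab}\log x\big)+C_\mu+\frac12\int_b^x\sqrt{(t-a)(t-b)}\frac{dt}t,$$ where $C_\mu=\frac14(a+b)\Big(1-\log\frac{b-a}4\Big)-\frac{\sqrt{ab}}2\log\frac{\sqrt b+\sqrt a}{\sqrt b-\sqrt a}$.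
   Context: $U^\mu(x)=\int\log\frac1{|x-t|}\,\mu(dt)$ denotes the logarithmic potential of $\mu$. *)

From Stdlib Require Import Reals.
From Coquelicot Require Import Coquelicot.
Open Scope R_scope.

Definition mu_density (a b t : R) : R :=
  / (2 * PI) * (sqrt ((t - a) * (b - t)) / t).

Definition U_mu (a b x : R) : R :=
  RInt (fun t => ln (/ Rabs (x - t)) * mu_density a b t) a b.

Definition C_mu (a b : R) : R :=
  / 4 * (a + b) * (1 - ln ((b - a) / 4))
  - sqrt (a * b) / 2 * ln ((sqrt b + sqrt a) / (sqrt b - sqrt a)).

From Stdlib Require Import Reals Lra Psatz.
From Coquelicot Require Import Coquelicot.
Open Scope R_scope.

(** The substitution [t = (a + b)/2 - (b - a)/2 cos th] turns both the mass of [mu] and its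
    Stieltjes transform [int dmu(t) / (x - t)] into Poisson-kernel integrals
    [int_0^pi sin^2 th / (1 + e^2 + 2 e cos th) dth = pi / 2].  This gives the mass and, for
    [x > b], [U'(x) = - (x - sqrt (a b) - sqrt ((x - a) (x - b))) / (2 x)].  The closed form has
    the same derivative (via an explicit primitive of [sqrt ((t - a) (t - b)) / t]), so the two
    sides differ by a constant on [(b, +oo)].  Adding [(sqrt b - sqrt a)^2 / 4 * ln x], both
    tend to [0] at [+oo]: the potential because [ln (x / (x - t)) = O (1 / x)] uniformly on
    [[a, b]], the closed form because it becomes a function of [1 / x] continuous at [0], whose
    value there vanishes exactly by the choice of [C_mu].  Hence the constant is [0].  At [x = b]
    both sides are right-continuous, since the density vanishes like [sqrt (b - t)], which
    dominates the logarithmic singularity of the kernel. *)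

Ltac continuity_step :=
  match goal with
  | |- continuous (fun _ => ?c) _ => apply continuous_const
  | |- continuous (fun y => y) _ => apply continuous_id
  | |- continuous (fun y => @?f y + @?g y) _ =>
      apply (continuous_plus (K := R_AbsRing) (V := R_NormedModule) f g)
  | |- continuous (fun y => @?f y - @?g y) _ =>
      apply (continuous_minus (K := R_AbsRing) (V := R_NormedModule) f g)
  | |- continuous (fun y => - @?f y) _ =>
      apply (continuous_opp (K := R_AbsRing) (V := R_NormedModule) f)
  | |- continuous (fun y => @?f y * @?g y) _ =>
      apply (continuous_mult (K := R_AbsRing) f g)
  | |- continuous (fun y => @?f y / @?g y) _ =>
      apply (continuous_mult (K := R_AbsRing) f (fun y => / g y))
  | |- continuous (fun y => / @?f y) _ => apply (continuous_Rinv_comp f)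
  | |- continuous (fun y => Rabs (@?f y)) _ => apply (continuous_Rabs_comp f)
  | |- continuous (fun y => sqrt (@?f y)) _ => apply (continuous_sqrt_comp f)
  | |- continuous (fun y => ln (@?f y)) _ =>
      apply (continuous_comp f ln); [| apply continuous_ln]
  end.

Ltac continuity_R := repeat continuity_step.

Ltac fold_Rminus :=
  repeat match goal with |- context [?x + - ?y] => change (x + - y) with (x - y) end.

Lemma ball_R (s eps z : R) : ball s eps z -> s - eps < z < s + eps.
Proof. intros Hz. change (Rabs (z - s) < eps) in Hz. apply Rabs_def2 in Hz. lra. Qed.

Lemma Rdiv_eq_of_mul_eq (x y z u : R) : y <> 0 -> u <> 0 -> x * u = z * y -> x / y = z / u.
Proof.
  intros Hy Hu H. replace x with (z * y / u) by (field_simplify_eq; [lra | auto]).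
  field. auto.
Qed.

Lemma ex_RInt_continuous_le (f : R -> R) (u v : R) : u <= v ->
  (forall t, u <= t <= v -> continuous f t) -> ex_RInt f u v.
Proof.
  intros Huv Hf. apply (ex_RInt_continuous (V := R_CompleteNormedModule)).
  intros t Ht. rewrite Rmin_left, Rmax_right in Ht by lra. auto.
Qed.

Lemma locally_is_RInt_RInt (f : R -> R) (u v d s : R) : u <= v -> 0 < d ->
  (forall t, u - d < t < v + d -> continuous f t) -> u - d < s < v + d ->
  locally s (fun z => is_RInt f u z (RInt f u z)).
Proof.
  intros Huv Hd Hf Hs.
  assert (He : 0 < Rmin (s - (u - d)) (v + d - s)) by (apply Rmin_glb_lt; lra).
  exists (mkposreal _ He). intros z Hz. apply ball_R in Hz. simpl in Hz.
  pose proof (Rmin_l (s - (u - d)) (v + d - s)). pose proof (Rmin_r (s - (u - d)) (v + d - s)).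
  apply (RInt_correct (V := R_CompleteNormedModule)), ex_RInt_continuous.
  intros t Ht. apply Hf.
  destruct (Rle_dec u z).
  - rewrite Rmin_left, Rmax_right in Ht by auto. lra.
  - rewrite Rmin_right, Rmax_left in Ht by lra. lra.
Qed.

Lemma RInt_eq_sub_of_is_derive (F f : R -> R) (u v d : R) : u < v -> 0 < d ->
  (forall t, u - d < t < v + d -> continuous f t) ->
  (forall t, u <= t <= v -> continuity_pt F t) ->
  (forall t, u < t < v -> is_derive F t (f t)) ->
  RInt f u v = F v - F u.
Proof.
  intros Huv Hd Hf HF HFd.
  destruct (MVT_gen (fun s => RInt f u s - F s) u v (fun _ => 0)) as [c [_ Hc]].
  - intros s Hs. rewrite Rmin_left, Rmax_right in Hs by lra.
    assert (H1 : is_derive (fun z => RInt f u z) s (f s)).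
    { apply (is_derive_RInt f _ u s).
      - apply (locally_is_RInt_RInt f u v d s); auto; lra.
      - apply Hf. lra. }
    replace 0 with (minus (f s) (f s)) by (unfold minus, plus, opp; simpl; ring).
    apply (is_derive_minus _ _ s _ _ H1 (HFd s Hs)).
  - intros s Hs. rewrite Rmin_left, Rmax_right in Hs by lra.
    apply continuity_pt_minus; [| apply HF; auto].
    apply continuity_pt_filterlim, (continuous_RInt_1 f u s).
    apply (locally_is_RInt_RInt f u v d s); auto; lra.
  - rewrite RInt_point in Hc. unfold zero in Hc; simpl in Hc. lra.
Qed.

Lemma eq_of_is_derive_0 (f : R -> R) (b x y : R) :
  (forall z, b < z -> is_derive f z 0) -> b < y -> y <= x -> f x = f y.
Proof.
  intros HD hby hyx.
  destruct (MVT_gen f y x (fun _ => 0)) as [c [_ Hc]].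
  - intros z Hz. apply HD. rewrite Rmin_left in Hz by lra. lra.
  - intros z Hz. apply continuity_pt_filterlim, (ex_derive_continuous (V := R_NormedModule)).
    eexists. apply HD. rewrite Rmin_left in Hz by lra. lra.
  - lra.
Qed.

Lemma filterlim_of_abs_le {T : Type} {F : (T -> Prop) -> Prop} {FF : Filter F}
  (f h : T -> R) (l : R) :
  filterlim h F (locally 0) -> F (fun t => Rabs (f t - l) <= h t) -> filterlim f F (locally l).
Proof.
  intros Hh Hb. apply filterlim_locally. intros eps.
  generalize (filter_and _ _ (proj1 (filterlim_locally h 0) Hh eps) Hb).
  apply filter_imp. intros t [Ht Hft]. change (Rabs (h t - 0) < eps) in Ht.
  change (Rabs (f t - l) < eps). apply Rabs_def2 in Ht. lra.
Qed.

Lemma is_lim_p_infty_0_of_abs_le (f : R -> R) (B C : R) :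
  (forall x, B < x -> Rabs (f x) <= C / (x - B)) -> is_lim f p_infty 0.
Proof.
  intros H. apply is_lim_spec. intros eps. simpl.
  pose proof (cond_pos eps). pose proof (Rabs_pos C).
  assert (0 <= Rabs C / eps) by (apply Rdiv_le_0_compat; lra).
  exists (B + Rabs C / eps + 1). intros x Hx.
  rewrite Rminus_0_r. eapply Rle_lt_trans; [apply H; lra |].
  apply (Rle_lt_trans _ (Rabs C / (x - B))).
  - apply Rmult_le_compat_r; [apply Rlt_le, Rinv_0_lt_compat; lra | apply Rle_abs].
  - apply Rlt_div_l; [lra |].
    replace (Rabs C) with (eps * (Rabs C / eps)) at 1 by (field; lra). nra.
Qed.

Lemma eq_of_is_derive_eq_is_lim (f g h df : R -> R) (b : R) :
  (forall x, b < x -> is_derive f x (df x)) -> (forall x, b < x -> is_derive g x (df x)) ->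
  is_lim (fun x => f x + h x) p_infty 0 -> is_lim (fun x => g x + h x) p_infty 0 ->
  forall x, b < x -> f x = g x.
Proof.
  intros Hf Hg Hfl Hgl x Hx.
  assert (Hconst : forall y, x <= y -> f y - g y = f x - g x).
  { intros y Hy. apply (eq_of_is_derive_0 (fun z => f z - g z) b); try lra.
    intros z Hz. replace 0 with (minus (df z) (df z)) by (unfold minus, plus, opp; simpl; ring).
    apply (is_derive_minus f g); auto. }
  set (phi := fun y => (f y + h y) - (g y + h y)).
  assert (H0 : is_lim phi p_infty (0 - 0)) by (apply is_lim_minus'; auto).
  assert (HK : is_lim phi p_infty (f x - g x)).
  { apply (is_lim_ext_loc (fun _ => f x - g x)); [| apply is_lim_const].
    exists x. intros y Hy. unfold phi. rewrite <- (Hconst y) by lra. ring. }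
  apply is_lim_unique in H0. apply is_lim_unique in HK. rewrite H0 in HK.
  injection HK. lra.
Qed.

Lemma eq_of_at_right_limits (f g : R -> R) (b : R) :
  filterlim f (at_right b) (locally (f b)) -> filterlim g (at_right b) (locally (g b)) ->
  (forall x, b < x -> f x = g x) -> f b = g b.
Proof.
  intros Hf Hg Hfg.
  apply (filterlim_locally_unique (F := at_right b) f (f b) (g b)); [exact Hf |].
  apply (filterlim_ext_loc g); [| exact Hg].
  exists (mkposreal 1 Rlt_0_1). intros y _ Hy. symmetry. auto.
Qed.

Lemma ln_le_sub_1 (y : R) : 0 < y -> ln y <= y - 1.
Proof.
  intros Hy. rewrite <- (ln_exp (y - 1)). apply ln_le; auto.
  pose proof (exp_ineq1_le (y - 1)). lra.
Qed.

Lemma ln_1_plus_le_2_sqrt (z : R) : 0 <= z -> ln (1 + z) <= 2 * sqrt z.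
Proof.
  intros Hz. pose proof (sqrt_pos z). pose proof (sqrt_sqrt z Hz).
  apply (Rle_trans _ (ln ((1 + sqrt z) * (1 + sqrt z)))).
  - apply ln_le; nra.
  - rewrite ln_mult by lra. pose proof (ln_le_sub_1 (1 + sqrt z)). lra.
Qed.

Lemma ln_inv_mul_sqrt_le (u : R) : 0 < u -> ln (/ u) * sqrt u <= 4 * sqrt (sqrt u).
Proof.
  intros Hu.
  assert (Hs : 0 < sqrt u) by (apply sqrt_lt_R0; auto).
  assert (Hv : 0 < sqrt (sqrt u)) by (apply sqrt_lt_R0; auto).
  assert (Ev : sqrt (sqrt u) * sqrt (sqrt u) = sqrt u) by (apply sqrt_sqrt; lra).
  assert (Eu : sqrt u * sqrt u = u) by (apply sqrt_sqrt; lra).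
  set (v := sqrt (sqrt u)) in *. set (s := sqrt u) in *. clearbody v s. subst u s.
  assert (HL : ln (/ (v * v * (v * v))) = 4 * ln (/ v)).
  { rewrite !ln_Rinv by nra. rewrite !ln_mult by nra. ring. }
  rewrite HL.
  pose proof (ln_le_sub_1 (/ v) (Rinv_0_lt_compat v Hv)).
  assert (Hmul : 4 * ln (/ v) * (v * v) <= 4 * (/ v - 1) * (v * v))
    by (apply Rmult_le_compat_r; nra).
  replace (4 * (/ v - 1) * (v * v)) with (4 * v - 4 * (v * v)) in Hmul by (field; lra).
  nra.
Qed.

Lemma ln_div_sub_le (x t b : R) : 0 <= t <= b -> b < x -> 0 <= ln (x / (x - t)) <= b / (x - b).
Proof.
  intros Ht Hx. split.
  - rewrite <- ln_1. apply ln_le; [lra |]. apply Rle_div_r; lra.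
  - eapply Rle_trans; [apply ln_le_sub_1, Rdiv_lt_0_compat; lra |].
    replace (x / (x - t) - 1) with (t / (x - t)) by (field; lra).
    apply (Rle_trans _ (b / (x - t))).
    + apply Rmult_le_compat_r; [apply Rlt_le, Rinv_0_lt_compat |]; lra.
    + apply Rmult_le_compat_l; [| apply Rinv_le_contravar]; lra.
Qed.

(** * A Poisson-kernel integral *)

Lemma poisson_denom_pos (e c : R) : -1 < e < 1 -> -1 <= c <= 1 -> 0 < 1 + e ^ 2 + 2 * e * c.
Proof.
  intros He Hc.
  replace (1 + e ^ 2 + 2 * e * c) with (((1 + c) * (1 + e) ^ 2 + (1 - c) * (1 - e) ^ 2) / 2)
    by field.
  assert (0 < (1 + e) ^ 2) by nra. assert (0 < (1 - e) ^ 2) by nra.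
  destruct (Rle_lt_dec 0 c); nra.
Qed.

Lemma one_plus_mul_pos (e c : R) : -1 < e < 1 -> -1 <= c <= 1 -> 0 < 1 + e * c.
Proof. intros He Hc. destruct (Rle_lt_dec 0 c); nra. Qed.

(* The [atan] term has derivative [e (e + cos t) / (1 + e^2 + 2 e cos t)]. *)
Definition poisson_primitive (e t : R) : R :=
  - (1 - e ^ 2) / (4 * e ^ 2) * (t - 2 * atan (e * sin t / (1 + e * cos t)))
  + ((1 + e ^ 2) * t - 2 * e * sin t) / (4 * e ^ 2).

Lemma is_RInt_sin2_poisson (e : R) : -1 < e < 1 -> e <> 0 ->
  is_RInt (fun t => sin t ^ 2 / (1 + e ^ 2 + 2 * e * cos t)) 0 PI (PI / 2).
Proof.
  intros He He0.
  assert (He2 : 0 < e * e) by (apply (Rsqr_pos_lt e He0)).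
  replace (PI / 2) with (poisson_primitive e PI - poisson_primitive e 0).
  2:{ unfold poisson_primitive. rewrite sin_PI, sin_0, cos_PI, cos_0.
      replace (e * 0 / (1 + e * -1)) with 0 by (field; nra).
      replace (e * 0 / (1 + e * 1)) with 0 by (field; nra).
      rewrite atan_0. field. nra. }
  apply (is_RInt_derive (poisson_primitive e)); intros t _;
    pose proof (COS_bound t) as Hc;
    pose proof (poisson_denom_pos e (cos t) He Hc).
  - pose proof (one_plus_mul_pos e (cos t) He Hc).
    pose proof (sin2_cos2 t) as Hsc. unfold Rsqr in Hsc.
    unfold poisson_primitive. auto_derive; [lra |].
    set (S := sin t) in *. set (C := cos t) in *.
    field_simplify; [| intro; nra | repeat split; intro; nra].
    replace (S ^ 2) with (1 - C ^ 2) by nra. field. repeat split; intro; nra.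
  - apply (ex_derive_continuous (fun t => sin t ^ 2 / (1 + e ^ 2 + 2 * e * cos t))).
    auto_derive. lra.
Qed.

Definition cos_param (p q th : R) : R := (p + q) / 2 - (q - p) / 2 * cos th.

(* With [e = (sqrt p - sqrt q) / (sqrt p + sqrt q)], [cos_param p q] is a multiple of the
   Poisson denominator [1 + e^2 + 2 e cos]. *)
Lemma is_RInt_sin2_div_cos_param (p q : R) : 0 < p -> 0 < q -> p <> q ->
  is_RInt (fun th => sin th ^ 2 / cos_param p q th) 0 PI (2 * PI / (sqrt p + sqrt q) ^ 2).
Proof.
  intros Hp Hq Hpq.
  assert (Hs : 0 < sqrt p) by (apply sqrt_lt_R0; lra).
  assert (HS : 0 < sqrt q) by (apply sqrt_lt_R0; lra).
  assert (HsS : sqrt p <> sqrt q) by (intro E; apply Hpq, sqrt_inj; lra).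
  pose proof (sqrt_sqrt p ltac:(lra)) as Ep. pose proof (sqrt_sqrt q ltac:(lra)) as Eq.
  set (s := sqrt p) in *. set (S := sqrt q) in *. clearbody s S. subst p q.
  unfold cos_param.
  set (e := (s - S) / (S + s)).
  assert (He : -1 < e < 1).
  { unfold e. split; [apply Rlt_div_r | apply Rlt_div_l]; lra. }
  assert (He0 : e <> 0).
  { unfold e, Rdiv. apply Rmult_integral_contrapositive_currified; [lra |].
    apply Rinv_neq_0_compat. lra. }
  replace (2 * PI / (s + S) ^ 2) with (scal (4 / (S + s) ^ 2) (PI / 2)).
  2:{ unfold scal; simpl; unfold mult; simpl. field. lra. }
  apply (is_RInt_ext (fun th => scal (4 / (S + s) ^ 2) (sin th ^ 2 / (1 + e ^ 2 + 2 * e * cos th)))).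
  - intros th _. pose proof (poisson_denom_pos e (cos th) He (COS_bound th)).
    unfold scal; simpl; unfold mult; simpl.
    replace ((s * s + S * S) / 2 - (S * S - s * s) / 2 * cos th)
      with ((S + s) ^ 2 / 4 * (1 + e ^ 2 + 2 * e * cos th)) by (unfold e; field; lra).
    field. split; nra.
  - apply (is_RInt_scal (V := R_NormedModule)). apply is_RInt_sin2_poisson; auto.
Qed.

(** * Mass and Stieltjes transform of the measure *)

Lemma RInt_cos_substitution (a b : R) (f : R -> R) : a < b ->
  (forall t, a <= t <= b -> continuous f t) ->
  RInt f a b = RInt (fun th => (b - a) / 2 * sin th * f (cos_param a b th)) 0 PI.
Proof.
  intros Hab Hf. unfold cos_param.
  rewrite (RInt_comp f (fun th => (a + b) / 2 - (b - a) / 2 * cos th)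
             (fun th => (b - a) / 2 * sin th)).
  - rewrite cos_0, cos_PI. f_equal; field.
  - intros th _. apply Hf. pose proof (COS_bound th). nra.
  - intros th _. split.
    + auto_derive; auto. ring.
    + apply (ex_derive_continuous (fun th => (b - a) / 2 * sin th)). auto_derive. auto.
Qed.

Lemma sqrt_cos_param (a b th : R) : a < b -> 0 <= th <= PI ->
  sqrt ((cos_param a b th - a) * (b - cos_param a b th)) = (b - a) / 2 * sin th.
Proof.
  intros Hab Hth. unfold cos_param.
  pose proof (sin_ge_0 th (proj1 Hth) (proj2 Hth)).
  assert (E : sin th ^ 2 = 1 - cos th ^ 2) by (pose proof (sin2_cos2 th); unfold Rsqr in *; lra).
  replace (((a + b) / 2 - (b - a) / 2 * cos th - a) * (b - ((a + b) / 2 - (b - a) / 2 * cos th)))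
    with (((b - a) / 2 * sin th) ^ 2) by (rewrite Rpow_mult_distr, E; field).
  apply sqrt_pow2. apply Rmult_le_pos; lra.
Qed.

Lemma mu_density_cos_param (a b th : R) : a < b -> 0 <= th <= PI ->
  (b - a) / 2 * sin th * mu_density a b (cos_param a b th)
  = / (2 * PI) * ((b - a) / 2) ^ 2 * (sin th ^ 2 / cos_param a b th).
Proof. intros Hab Hth. unfold mu_density. rewrite sqrt_cos_param by auto. unfold Rdiv. ring. Qed.

Lemma continuous_mu_density (a b t : R) : 0 < t -> continuous (mu_density a b) t.
Proof. intros Ht. unfold mu_density. continuity_R. lra. Qed.

Lemma RInt_mu_density (a b : R) : 0 < a -> a < b ->
  RInt (mu_density a b) a b = / 4 * (sqrt b - sqrt a) ^ 2.
Proof.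
  intros ha hab.
  rewrite (RInt_cos_substitution a b) by (auto; intros t Ht; apply continuous_mu_density; lra).
  apply is_RInt_unique.
  replace (/ 4 * (sqrt b - sqrt a) ^ 2)
    with (scal (/ (2 * PI) * ((b - a) / 2) ^ 2) (2 * PI / (sqrt a + sqrt b) ^ 2)).
  2:{ pose proof PI_RGT_0. pose proof (sqrt_lt_R0 a ha). pose proof (sqrt_lt_R0 b ltac:(lra)).
      pose proof (sqrt_sqrt a ltac:(lra)) as Ea. pose proof (sqrt_sqrt b ltac:(lra)) as Eb.
      set (s := sqrt a) in *. set (S := sqrt b) in *. clearbody s S. subst a b.
      unfold scal; simpl; unfold mult; simpl. field. lra. }
  apply (is_RInt_ext (fun th => scal (/ (2 * PI) * ((b - a) / 2) ^ 2) (sin th ^ 2 / cos_param a b th))).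
  - intros th Hth. rewrite Rmin_left, Rmax_right in Hth by (pose proof PI_RGT_0; lra).
    symmetry. apply mu_density_cos_param; lra.
  - apply (is_RInt_scal (V := R_NormedModule)). apply is_RInt_sin2_div_cos_param; lra.
Qed.

Lemma stieltjes_mu_closed_form (a b x : R) : 0 < a -> a < b -> b < x ->
  - / (2 * PI * x) * ((b - a) / 2) ^ 2 * (2 * PI / (sqrt a + sqrt b) ^ 2)
  + - / (2 * PI * x) * ((b - a) / 2) ^ 2 * (2 * PI / (sqrt (x - a) + sqrt (x - b)) ^ 2)
  = - (x - sqrt (a * b) - sqrt ((x - a) * (x - b))) / (2 * x).
Proof.
  intros ha hab hbx. pose proof PI_RGT_0.
  rewrite !sqrt_mult by lra.
  pose proof (sqrt_lt_R0 a ha). pose proof (sqrt_lt_R0 (x - b) ltac:(lra)).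
  pose proof (sqrt_pos b). pose proof (sqrt_pos (x - a)).
  pose proof (sqrt_sqrt a ltac:(lra)). pose proof (sqrt_sqrt b ltac:(lra)).
  pose proof (sqrt_sqrt (x - a) ltac:(lra)). pose proof (sqrt_sqrt (x - b) ltac:(lra)).
  set (s := sqrt a) in *. set (S := sqrt b) in *.
  set (u := sqrt (x - a)) in *. set (v := sqrt (x - b)) in *. clearbody s S u v.
  replace (b - a) with ((S - s) * (S + s)) at 1 by nra.
  replace (b - a) with ((u - v) * (u + v)) by nra.
  replace (- (x - s * S - u * v)) with (- ((S - s) ^ 2 + (u - v) ^ 2) / 2) by nra.
  field. repeat split; lra.
Qed.

(* Partial fractions [/ ((x - t) t) = (/ t + / (x - t)) / x], and
   [x - cos_param a b th = cos_param (x - a) (x - b) th]. *)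
Lemma RInt_stieltjes_mu (a b x : R) : 0 < a -> a < b -> b < x ->
  RInt (fun t => - / (x - t) * mu_density a b t) a b
  = - (x - sqrt (a * b) - sqrt ((x - a) * (x - b))) / (2 * x).
Proof.
  intros ha hab hbx.
  rewrite (RInt_cos_substitution a b); auto.
  2:{ intros t Ht. continuity_R; try apply continuous_mu_density; lra. }
  apply is_RInt_unique.
  set (k := - / (2 * PI * x) * ((b - a) / 2) ^ 2).
  rewrite <- stieltjes_mu_closed_form by auto.
  fold k.
  apply (is_RInt_ext (fun th => plus (scal k (sin th ^ 2 / cos_param a b th))
                              (scal k (sin th ^ 2 / cos_param (x - a) (x - b) th)))).
  - intros th Hth. rewrite Rmin_left, Rmax_right in Hth by (pose proof PI_RGT_0; lra).
    assert (Ex : x - cos_param a b th = cos_param (x - a) (x - b) th)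
      by (unfold cos_param; field).
    assert (0 < cos_param a b th) by (unfold cos_param; pose proof (COS_bound th); nra).
    assert (0 < cos_param (x - a) (x - b) th) by (unfold cos_param; pose proof (COS_bound th); nra).
    rewrite <- Rmult_assoc, (Rmult_comm _ (- / _)), Rmult_assoc, mu_density_cos_param by lra.
    unfold k, plus, scal; simpl; unfold mult; simpl.
    rewrite <- Ex. field. pose proof PI_RGT_0. repeat split; lra.
  - apply (is_RInt_plus (V := R_NormedModule)); apply (is_RInt_scal (V := R_NormedModule));
      apply is_RInt_sin2_div_cos_param; lra.
Qed.

(** * The potential *)

Lemma mu_density_nonneg (a b t : R) : 0 < t -> 0 <= mu_density a b t.
Proof.
  intros Ht. unfold mu_density. pose proof PI_RGT_0. pose proof (sqrt_pos ((t - a) * (b - t))).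
  apply Rmult_le_pos; [apply Rlt_le, Rinv_0_lt_compat; lra | apply Rdiv_le_0_compat; lra].
Qed.

Lemma mu_density_eq_0 (a b t : R) : a < b -> (t <= a \/ b <= t) -> mu_density a b t = 0.
Proof. intros hab ht. unfold mu_density. rewrite sqrt_neg_0 by nra. unfold Rdiv. ring. Qed.

Lemma mu_density_le_sqrt (a b t : R) : 0 < a -> a < b -> a <= t <= b ->
  mu_density a b t <= sqrt (b - a) / (2 * PI * a) * sqrt (b - t).
Proof.
  intros ha hab Ht. pose proof PI_RGT_0. unfold mu_density.
  rewrite sqrt_mult by lra.
  assert (sqrt (t - a) <= sqrt (b - a)) by (apply sqrt_le_1_alt; lra).
  pose proof (sqrt_pos (t - a)). pose proof (sqrt_pos (b - t)).
  replace (sqrt (b - a) / (2 * PI * a) * sqrt (b - t))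
    with (/ (2 * PI) * (sqrt (b - a) * sqrt (b - t) / a)) by (field; lra).
  apply Rmult_le_compat_l; [apply Rlt_le, Rinv_0_lt_compat; lra |].
  unfold Rdiv. apply Rmult_le_compat; try nra.
  - apply Rlt_le, Rinv_0_lt_compat; lra.
  - apply Rinv_le_contravar; lra.
Qed.

Lemma continuous_log_kernel_at_right_end (a b : R) : 0 < a -> a < b ->
  continuous (fun t => ln (/ Rabs (b - t)) * mu_density a b t) b.
Proof.
  intros ha hab. pose proof PI_RGT_0.
  set (K := sqrt (b - a) / (2 * PI * a)).
  assert (HK : 0 <= K) by (apply Rdiv_le_0_compat; [apply sqrt_pos | nra]).
  apply (filterlim_of_abs_le _ (fun t => 4 * K * sqrt (sqrt (Rabs (b - t))))).
  - assert (Hc : continuous (fun t => 4 * K * sqrt (sqrt (Rabs (b - t)))) b) by continuity_R.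
    replace 0 with (4 * K * sqrt (sqrt (Rabs (b - b)))) by
      (rewrite Rminus_eq_0, Rabs_R0, !sqrt_0; ring).
    exact Hc.
  - assert (Hd : 0 < Rmin 1 (b - a)) by (apply Rmin_glb_lt; lra).
    exists (mkposreal _ Hd). intros t Ht. apply ball_R in Ht. simpl in Ht.
    pose proof (Rmin_l 1 (b - a)). pose proof (Rmin_r 1 (b - a)).
    rewrite (mu_density_eq_0 a b b), Rmult_0_r, Rminus_0_r by lra.
    pose proof (sqrt_pos (sqrt (Rabs (b - t)))).
    destruct (Rle_lt_dec b t) as [Hbt | Hbt].
    { rewrite (mu_density_eq_0 a b t), Rmult_0_r, Rabs_R0 by lra. nra. }
    rewrite (Rabs_pos_eq (b - t)) in * by lra.
    assert (Hu : 0 < b - t <= 1) by lra. set (u := b - t) in *.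
    assert (Hln : 0 <= ln (/ u)).
    { rewrite <- ln_1. apply ln_le; [lra |]. rewrite <- Rinv_1. apply Rinv_le_contravar; lra. }
    pose proof (mu_density_nonneg a b t ltac:(lra)).
    pose proof (mu_density_le_sqrt a b t ha hab ltac:(lra)) as Hmu. fold K u in Hmu.
    pose proof (ln_inv_mul_sqrt_le u ltac:(lra)).
    rewrite Rabs_pos_eq by (apply Rmult_le_pos; auto).
    apply (Rle_trans _ (ln (/ u) * (K * sqrt u))); [apply Rmult_le_compat_l; auto |].
    replace (ln (/ u) * (K * sqrt u)) with (K * (ln (/ u) * sqrt u)) by ring. nra.
Qed.

Lemma ex_RInt_log_kernel (a b x : R) : 0 < a -> a < b -> b <= x ->
  ex_RInt (fun t => ln (/ Rabs (x - t)) * mu_density a b t) a b.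
Proof.
  intros ha hab hbx. apply ex_RInt_continuous_le; [lra |]. intros t Ht.
  destruct (Req_dec t x) as [-> | Htx].
  - replace x with b by lra. apply continuous_log_kernel_at_right_end; auto.
  - continuity_R; try apply continuous_mu_density; try lra.
    + apply Rabs_no_R0. lra.
    + apply Rinv_0_lt_compat, Rabs_pos_lt. lra.
Qed.

Lemma is_derive_log_kernel (x t c : R) : t < x ->
  is_derive (fun z => ln (/ Rabs (z - t)) * c) x (- / (x - t) * c).
Proof.
  intros H. auto_derive; fold_Rminus; rewrite Rabs_pos_eq by lra.
  - repeat split; try lra. apply Rinv_0_lt_compat; lra.
  - rewrite sign_eq_1 by lra. field. lra.
Qed.

Lemma is_derive_U_mu (a b x : R) : 0 < a -> a < b -> b < x ->
  is_derive (U_mu a b) x (- (x - sqrt (a * b) - sqrt ((x - a) * (x - b))) / (2 * x)).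
Proof.
  intros ha hab hbx. unfold U_mu.
  rewrite <- (RInt_stieltjes_mu a b x ha hab hbx).
  assert (Hdel : 0 < (x - b) / 2) by lra.
  set (del := mkposreal _ Hdel).
  assert (HD : forall u t, t < u ->
    Derive (fun z => ln (/ Rabs (z - t)) * mu_density a b t) u = - / (u - t) * mu_density a b t).
  { intros u t Htu. apply is_derive_unique, is_derive_log_kernel, Htu. }
  rewrite (RInt_ext _ (fun t => Derive (fun u => ln (/ Rabs (u - t)) * mu_density a b t) x)).
  2:{ intros t Ht. rewrite Rmin_left, Rmax_right in Ht by lra. rewrite HD; [reflexivity | lra]. }
  apply (is_derive_RInt_param (fun u t => ln (/ Rabs (u - t)) * mu_density a b t)).
  - exists del. intros y Hy t Ht. apply ball_R in Hy. simpl in Hy.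
    rewrite Rmin_left, Rmax_right in Ht by lra.
    eexists. apply is_derive_log_kernel. lra.
  - intros t Ht. rewrite Rmin_left, Rmax_right in Ht by lra.
    apply continuity_2d_pt_ext_loc with (fun u v => - / (u - v) * mu_density a b v).
    + exists del. intros u v Hu Hv. simpl in Hu, Hv.
      apply Rabs_def2 in Hu. apply Rabs_def2 in Hv. rewrite HD; lra.
    + apply continuity_2d_pt_mult.
      * apply continuity_2d_pt_opp, continuity_2d_pt_inv; [| lra].
        apply continuity_2d_pt_minus; [apply continuity_2d_pt_id1 | apply continuity_2d_pt_id2].
      * apply (continuity_1d_2d_pt_comp (mu_density a b) (fun u v => v)).
        -- apply continuity_pt_filterlim, continuous_mu_density. lra.
        -- apply continuity_2d_pt_id2.
  - exists del. intros y Hy. apply ball_R in Hy. simpl in Hy.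
    apply ex_RInt_log_kernel; lra.
Qed.

Lemma is_lim_U_mu_add_ln (a b : R) : 0 < a -> a < b ->
  is_lim (fun x => U_mu a b x + / 4 * (sqrt b - sqrt a) ^ 2 * ln x) p_infty 0.
Proof.
  intros ha hab. pose proof PI_RGT_0.
  set (M := sqrt (b - a) / (2 * PI * a) * sqrt (b - a)).
  apply (is_lim_p_infty_0_of_abs_le _ b ((b - a) * (M * b))).
  intros x Hx.
  assert (Hex : ex_RInt (mu_density a b) a b).
  { apply ex_RInt_continuous_le; [lra |]. intros t Ht. apply continuous_mu_density. lra. }
  rewrite <- (RInt_mu_density a b ha hab). unfold U_mu.
  rewrite Rmult_comm, <- (RInt_scal (V := R_CompleteNormedModule)) by auto.
  rewrite <- (RInt_plus (V := R_CompleteNormedModule)).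
  2:{ apply ex_RInt_log_kernel; lra. }
  2:{ apply (ex_RInt_scal (V := R_CompleteNormedModule)). auto. }
  replace ((b - a) * (M * b) / (x - b)) with ((b - a) * (M * (b / (x - b)))) by (field; lra).
  apply abs_RInt_le_const; [lra | |].
  { apply (ex_RInt_plus (V := R_CompleteNormedModule)); [apply ex_RInt_log_kernel; lra |].
    apply (ex_RInt_scal (V := R_CompleteNormedModule)). auto. }
  intros t Ht. unfold plus, scal; simpl; unfold mult; simpl.
  rewrite (Rabs_pos_eq (x - t)) by lra.
  replace (ln (/ (x - t)) * mu_density a b t + ln x * mu_density a b t)
    with (ln (x / (x - t)) * mu_density a b t)
    by (unfold Rdiv; rewrite ln_mult, ln_Rinv by (try apply Rinv_0_lt_compat; lra); ring).
  pose proof (ln_div_sub_le x t b ltac:(lra) Hx).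
  pose proof (mu_density_nonneg a b t ltac:(lra)).
  assert (mu_density a b t <= M).
  { eapply Rle_trans; [apply mu_density_le_sqrt; auto |].
    apply Rmult_le_compat_l; [apply Rdiv_le_0_compat; [apply sqrt_pos | nra] |].
    apply sqrt_le_1_alt. lra. }
  rewrite Rabs_pos_eq by (apply Rmult_le_pos; lra).
  rewrite Rmult_comm. apply Rmult_le_compat; lra.
Qed.

Lemma U_mu_sub_U_mu_right_end_le (a b y : R) : 0 < a -> a < b -> b < y ->
  Rabs (U_mu a b y - U_mu a b b)
  <= (b - a) * (2 * (sqrt (b - a) / (2 * PI * a)) * sqrt (y - b)).
Proof.
  intros ha hab hby. pose proof PI_RGT_0.
  set (K := sqrt (b - a) / (2 * PI * a)).
  assert (HK : 0 <= K) by (apply Rdiv_le_0_compat; [apply sqrt_pos | nra]).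
  unfold U_mu.
  rewrite <- (RInt_minus (V := R_CompleteNormedModule)) by (apply ex_RInt_log_kernel; lra).
  apply abs_RInt_le_const; [lra | apply (ex_RInt_minus (V := R_CompleteNormedModule));
    apply ex_RInt_log_kernel; lra |].
  intros t Ht. unfold minus, plus, opp; simpl.
  destruct (Req_dec t b) as [-> | Hne].
  { rewrite (mu_density_eq_0 a b b), !Rmult_0_r, Ropp_0, Rplus_0_r, Rabs_R0 by lra.
    pose proof (sqrt_pos (y - b)). nra. }
  set (u := b - t). set (h := y - b).
  assert (Hu : 0 < u) by (unfold u; lra). assert (Hh : 0 < h) by (unfold h; lra).
  replace (y - t) with (u + h) by (unfold u, h; ring).
  rewrite (Rabs_pos_eq u), (Rabs_pos_eq (u + h)) by lra.
  replace (ln (/ (u + h)) * mu_density a b t + - (ln (/ u) * mu_density a b t))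
    with (- (ln (1 + h / u) * mu_density a b t)).
  2:{ replace (1 + h / u) with ((u + h) / u) by (field; lra).
      rewrite ln_div, !ln_Rinv by lra. ring. }
  assert (Hhu : 0 <= h / u) by (apply Rdiv_le_0_compat; lra).
  assert (0 <= ln (1 + h / u)) by (rewrite <- ln_1; apply ln_le; lra).
  pose proof (mu_density_nonneg a b t ltac:(lra)).
  pose proof (mu_density_le_sqrt a b t ha hab ltac:(lra)) as Hmu. fold K u in Hmu.
  pose proof (ln_1_plus_le_2_sqrt (h / u) Hhu).
  assert (Esq : sqrt (h / u) * sqrt u = sqrt h) by (rewrite <- sqrt_mult by lra; f_equal; field; lra).
  rewrite Rabs_Ropp, Rabs_pos_eq by (apply Rmult_le_pos; auto).
  apply (Rle_trans _ (2 * sqrt (h / u) * (K * sqrt u))); [apply Rmult_le_compat; auto |].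
  replace (2 * sqrt (h / u) * (K * sqrt u)) with (2 * K * (sqrt (h / u) * sqrt u)) by ring.
  rewrite Esq. lra.
Qed.

Lemma U_mu_right_continuous_right_end (a b : R) : 0 < a -> a < b ->
  filterlim (U_mu a b) (at_right b) (locally (U_mu a b b)).
Proof.
  intros ha hab.
  set (C := (b - a) * (2 * (sqrt (b - a) / (2 * PI * a)))).
  apply (filterlim_of_abs_le _ (fun y => C * sqrt (y - b))).
  - apply (filterlim_filter_le_1 (F := locally b)); [apply filter_le_within |].
    replace 0 with (C * sqrt (b - b)) by (rewrite Rminus_eq_0, sqrt_0; ring).
    change (continuous (fun y => C * sqrt (y - b)) b). continuity_R.
  - exists (mkposreal 1 Rlt_0_1). intros y _ Hy.
    unfold C. rewrite Rmult_assoc. apply U_mu_sub_U_mu_right_end_le; auto.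
Qed.

(** * The closed form *)

Definition sqrt_prod_div_primitive (a b t : R) : R :=
  sqrt ((t - a) * (t - b))
  - (a + b) / 2 * ln (t - (a + b) / 2 + sqrt ((t - a) * (t - b)))
  - sqrt (a * b) * ln (((a + b) / 2 * t - a * b - sqrt (a * b) * sqrt ((t - a) * (t - b))) / t).

Lemma primitive_log_arg_pos (a b t : R) : 0 < a -> a < b -> b <= t ->
  0 < (a + b) / 2 * t - a * b - sqrt (a * b) * sqrt ((t - a) * (t - b)).
Proof.
  intros ha hab hbt.
  set (w := sqrt ((t - a) * (t - b))). set (p := sqrt (a * b)).
  assert (Ew : w * w = (t - a) * (t - b)) by (apply sqrt_sqrt; nra).
  assert (Ep : p * p = a * b) by (apply sqrt_sqrt; nra).
  assert (0 <= w) by apply sqrt_pos. assert (0 <= p) by apply sqrt_pos.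
  assert (0 < (a + b) / 2 * t - a * b) by nra.
  assert (((a + b) / 2 * t - a * b) ^ 2 - (p * w) ^ 2 = t ^ 2 * ((b - a) / 2) ^ 2).
  { replace ((p * w) ^ 2) with ((p * p) * (w * w)) by ring. rewrite Ep, Ew. field. }
  assert (0 < t ^ 2 * ((b - a) / 2) ^ 2) by (apply Rmult_lt_0_compat; apply pow_lt; lra).
  assert (0 <= p * w) by (apply Rmult_le_pos; auto).
  nra.
Qed.

Lemma is_derive_sqrt_prod (a b t : R) : a < b -> b < t ->
  is_derive (fun t => sqrt ((t - a) * (t - b))) t ((t - (a + b) / 2) / sqrt ((t - a) * (t - b))).
Proof.
  intros hab hbt. assert (0 < sqrt ((t - a) * (t - b))) by (apply sqrt_lt_R0; nra).
  auto_derive; fold_Rminus; [nra | field; lra].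
Qed.

Lemma is_derive_ln_add_sqrt_prod (a b t : R) : a < b -> b < t ->
  is_derive (fun t => ln (t - (a + b) / 2 + sqrt ((t - a) * (t - b)))) t
    (/ sqrt ((t - a) * (t - b))).
Proof.
  intros hab hbt. assert (0 < sqrt ((t - a) * (t - b))) by (apply sqrt_lt_R0; nra).
  auto_derive; fold_Rminus; [repeat split; nra | field; split; lra].
Qed.

Lemma is_derive_ln_primitive_log_arg (a b t : R) : 0 < a -> a < b -> b < t ->
  is_derive
    (fun t => ln (((a + b) / 2 * t - a * b - sqrt (a * b) * sqrt ((t - a) * (t - b))) / t)) t
    (- sqrt (a * b) / (t * sqrt ((t - a) * (t - b)))).
Proof.
  intros ha hab hbt.
  pose proof (primitive_log_arg_pos a b t ha hab ltac:(lra)) as HN.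
  assert (Hw : 0 < sqrt ((t - a) * (t - b))) by (apply sqrt_lt_R0; nra).
  pose proof (sqrt_sqrt ((t - a) * (t - b)) ltac:(nra)) as Ew.
  pose proof (sqrt_sqrt (a * b) ltac:(nra)) as Ep.
  auto_derive; fold_Rminus.
  { repeat split; try nra. apply Rdiv_lt_0_compat; lra. }
  set (w := sqrt ((t - a) * (t - b))) in *. set (p := sqrt (a * b)) in *. clearbody w p.
  field_simplify; try (repeat split; lra).
  apply Rdiv_eq_of_mul_eq.
  - replace (-2 * a * b * t * w + a * t ^ 2 * w + b * t ^ 2 * w - 2 * p * t * w ^ 2)
      with (2 * t * w * ((a + b) / 2 * t - a * b - p * w)) by field.
    repeat apply Rmult_integral_contrapositive_currified; lra.
  - repeat apply Rmult_integral_contrapositive_currified; lra.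
  - assert ((p * t * w) * (w * w) = (p * t * w) * ((t - a) * (t - b))) by (rewrite Ew; ring).
    assert ((t * w * w) * (p * p) = (t * w * w) * (a * b)) by (rewrite Ep; ring).
    lra.
Qed.

Lemma is_derive_sqrt_prod_div_primitive (a b t : R) : 0 < a -> a < b -> b < t ->
  is_derive (sqrt_prod_div_primitive a b) t (sqrt ((t - a) * (t - b)) / t).
Proof.
  intros ha hab hbt.
  pose proof (is_derive_minus _ _ t _ _
    (is_derive_minus _ _ t _ _ (is_derive_sqrt_prod a b t hab hbt)
       (is_derive_scal _ t ((a + b) / 2) _ (is_derive_ln_add_sqrt_prod a b t hab hbt)))
    (is_derive_scal _ t (sqrt (a * b)) _ (is_derive_ln_primitive_log_arg a b t ha hab hbt))) as HF.
  replace (sqrt ((t - a) * (t - b)) / t) with (minus (minus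
    ((t - (a + b) / 2) / sqrt ((t - a) * (t - b)))
    (scal ((a + b) / 2) (/ sqrt ((t - a) * (t - b)))))
    (scal (sqrt (a * b)) (- sqrt (a * b) / (t * sqrt ((t - a) * (t - b)))))); [exact HF |].
  unfold minus, plus, opp, scal; simpl; unfold mult; simpl.
  assert (Hw : 0 < sqrt ((t - a) * (t - b))) by (apply sqrt_lt_R0; nra).
  pose proof (sqrt_sqrt ((t - a) * (t - b)) ltac:(nra)) as Ew.
  pose proof (sqrt_sqrt (a * b) ltac:(nra)) as Ep.
  set (w := sqrt ((t - a) * (t - b))) in *. set (p := sqrt (a * b)) in *. clearbody w p.
  replace (w / t) with (w * w / (t * w)) by (field; lra).
  rewrite Ew. replace (p * (- p / (t * w))) with (- (p * p) / (t * w)) by (field; lra).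
  rewrite Ep. field. lra.
Qed.

Lemma RInt_sqrt_prod_div (a b x : R) : 0 < a -> a < b -> b <= x ->
  RInt (fun t => sqrt ((t - a) * (t - b)) / t) b x
  = sqrt_prod_div_primitive a b x - sqrt_prod_div_primitive a b b.
Proof.
  intros ha hab hbx.
  destruct (Req_dec b x) as [<- | Hne].
  { rewrite RInt_point. unfold zero; simpl. ring. }
  apply (RInt_eq_sub_of_is_derive _ _ b x (b / 2)); try lra.
  - intros t Ht. continuity_R. lra.
  - intros t Ht. apply continuity_pt_filterlim.
    change (continuous (sqrt_prod_div_primitive a b) t). unfold sqrt_prod_div_primitive.
    continuity_R; try lra.
    + pose proof (sqrt_pos ((t - a) * (t - b))). lra.
    + apply Rdiv_lt_0_compat; [apply primitive_log_arg_pos |]; lra.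
  - intros t Ht. apply is_derive_sqrt_prod_div_primitive; lra.
Qed.

Definition U_formula (a b x : R) : R :=
  - / 2 * (x - sqrt (a * b) * ln x) + C_mu a b
  + / 2 * RInt (fun t => sqrt ((t - a) * (t - b)) / t) b x.

Lemma continuous_U_formula (a b x : R) : 0 < a -> a < b -> b <= x ->
  continuous (U_formula a b) x.
Proof.
  intros ha hab hbx. unfold U_formula. continuity_R; try lra.
  apply (continuous_RInt_1 (fun t => sqrt ((t - a) * (t - b)) / t) b x).
  apply (locally_is_RInt_RInt _ b (x + 1) (b / 2) x); try lra.
  intros t Ht. continuity_R. lra.
Qed.

Lemma is_derive_U_formula (a b x : R) : 0 < a -> a < b -> b < x ->
  is_derive (U_formula a b) x (- (x - sqrt (a * b) - sqrt ((x - a) * (x - b))) / (2 * x)).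
Proof.
  intros ha hab hbx.
  assert (H1 : is_derive (fun y => - / 2 * (y - sqrt (a * b) * ln y) + C_mu a b) x
                 (- / 2 * (1 - sqrt (a * b) / x))) by (auto_derive; [lra | field; lra]).
  assert (H2 : is_derive (fun y => RInt (fun t => sqrt ((t - a) * (t - b)) / t) b y) x
                 (sqrt ((x - a) * (x - b)) / x)).
  { apply (is_derive_RInt (fun t => sqrt ((t - a) * (t - b)) / t) _ b x).
    - apply (locally_is_RInt_RInt _ b (x + 1) (b / 2) x); try lra.
      intros t Ht. continuity_R. lra.
    - continuity_R. lra. }
  replace (- (x - sqrt (a * b) - sqrt ((x - a) * (x - b))) / (2 * x))
    with (plus (- / 2 * (1 - sqrt (a * b) / x)) (scal (/ 2) (sqrt ((x - a) * (x - b)) / x)))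
    by (unfold plus, scal; simpl; unfold mult; simpl; field; lra).
  apply (is_derive_plus _ _ x _ _ H1 (is_derive_scal _ x (/ 2) _ H2)).
Qed.

(* [U_formula a b (/ y) + / 4 * (sqrt b - sqrt a) ^ 2 * ln (/ y)], in a form continuous at [y = 0]. *)
Definition U_formula_at_inv (a b y : R) : R :=
  C_mu a b - sqrt_prod_div_primitive a b b / 2
  + / 2 * ((a * b * y - (a + b)) / (sqrt ((1 - a * y) * (1 - b * y)) + 1)
           - (a + b) / 2 * ln (1 - (a + b) / 2 * y + sqrt ((1 - a * y) * (1 - b * y)))
           - sqrt (a * b)
             * ln ((a + b) / 2 - a * b * y - sqrt (a * b) * sqrt ((1 - a * y) * (1 - b * y)))).

Lemma sqrt_mul_lt_mean (a b : R) : 0 < a -> a < b -> sqrt (a * b) < (a + b) / 2.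
Proof.
  intros ha hab. rewrite sqrt_mult by lra.
  pose proof (sqrt_lt_R0 a ha). pose proof (sqrt_lt_1 a b ltac:(lra) ltac:(lra) hab).
  pose proof (sqrt_sqrt a ltac:(lra)). pose proof (sqrt_sqrt b ltac:(lra)). nra.
Qed.

Lemma U_formula_at_inv_0 (a b : R) : 0 < a -> a < b -> U_formula_at_inv a b 0 = 0.
Proof.
  intros ha hab. pose proof (sqrt_mul_lt_mean a b ha hab).
  unfold U_formula_at_inv, sqrt_prod_div_primitive, C_mu.
  replace ((1 - a * 0) * (1 - b * 0)) with 1 by ring. rewrite sqrt_1.
  replace ((b - a) * (b - b)) with 0 by ring. rewrite sqrt_0.
  replace (a * b * 0) with 0 by ring.
  replace (1 - (a + b) / 2 * 0 + 1) with 2 by ring.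
  replace (b - (a + b) / 2 + 0) with ((b - a) / 2) by field.
  replace (((a + b) / 2 * b - a * b - sqrt (a * b) * 0) / b) with ((b - a) / 2) by (field; lra).
  replace ((a + b) / 2 - 0 - sqrt (a * b) * 1) with ((a + b) / 2 - sqrt (a * b)) by ring.
  replace ((b - a) / 4) with (((b - a) / 2) / 2) by field.
  replace ((sqrt b + sqrt a) / (sqrt b - sqrt a))
    with (((b - a) / 2) / ((a + b) / 2 - sqrt (a * b))).
  2:{ rewrite sqrt_mult by lra.
      pose proof (sqrt_lt_R0 a ha). pose proof (sqrt_lt_1 a b ltac:(lra) ltac:(lra) hab).
      pose proof (sqrt_sqrt a ltac:(lra)) as Ea. pose proof (sqrt_sqrt b ltac:(lra)) as Eb.
      set (s := sqrt a) in *. set (S := sqrt b) in *. clearbody s S. subst a b.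
      field. split; nra. }
  rewrite !ln_div by lra. field.
Qed.

Lemma continuous_U_formula_at_inv_0 (a b : R) : 0 < a -> a < b ->
  continuous (U_formula_at_inv a b) 0.
Proof.
  intros ha hab. pose proof (sqrt_mul_lt_mean a b ha hab).
  unfold U_formula_at_inv. continuity_R.
  all: replace ((1 - a * 0) * (1 - b * 0)) with 1 by ring; rewrite ?sqrt_1; lra.
Qed.

Lemma U_formula_add_ln (a b x : R) : 0 < a -> a < b -> b < x ->
  U_formula a b x + / 4 * (sqrt b - sqrt a) ^ 2 * ln x = U_formula_at_inv a b (/ x).
Proof.
  intros ha hab hbx.
  unfold U_formula. rewrite RInt_sqrt_prod_div by lra.
  pose proof (sqrt_mul_lt_mean a b ha hab).
  replace (/ 4 * (sqrt b - sqrt a) ^ 2) with (((a + b) / 2 - sqrt (a * b)) / 2).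
  2:{ rewrite sqrt_mult by lra.
      pose proof (sqrt_sqrt a ltac:(lra)) as Ea. pose proof (sqrt_sqrt b ltac:(lra)) as Eb.
      set (s := sqrt a) in *. set (S := sqrt b) in *. clearbody s S. subst a b. field. }
  assert (Hr : 0 <= (1 - a * / x) * (1 - b * / x)).
  { apply Rmult_le_pos; apply (Rmult_le_reg_r x); try lra; field_simplify; lra. }
  set (r := sqrt ((1 - a * / x) * (1 - b * / x))).
  assert (Hsq : sqrt ((x - a) * (x - b)) = x * r).
  { transitivity (sqrt (x ^ 2 * ((1 - a * / x) * (1 - b * / x)))).
    - f_equal. field. lra.
    - rewrite sqrt_mult, sqrt_pow2 by (auto; try apply pow2_ge_0; lra). reflexivity. }
  assert (Er : r * r = (1 - a * / x) * (1 - b * / x)) by (apply sqrt_sqrt; auto).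
  assert (Hr0 : 0 <= r) by apply sqrt_pos.
  unfold sqrt_prod_div_primitive at 1. rewrite Hsq.
  replace (x - (a + b) / 2 + x * r) with (x * (1 - (a + b) / 2 * / x + r)) by (field; lra).
  replace (((a + b) / 2 * x - a * b - sqrt (a * b) * (x * r)) / x)
    with ((a + b) / 2 - a * b * / x - sqrt (a * b) * r) by (field; lra).
  rewrite ln_mult; [| lra |].
  2:{ assert (0 < 1 - (a + b) / 2 * / x)
        by (apply (Rmult_lt_reg_r x); try lra; field_simplify; lra). lra. }
  unfold U_formula_at_inv. fold r. clearbody r.
  replace ((a * b * / x - (a + b)) / (r + 1)) with (x * r - x).
  2:{ apply (Rmult_eq_reg_r (r + 1)); [| lra].
      replace ((a * b * / x - (a + b)) / (r + 1) * (r + 1)) with (a * b * / x - (a + b))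
        by (field; lra).
      replace ((x * r - x) * (r + 1)) with (x * (r * r) - x) by ring. rewrite Er. field. lra. }
  field.
Qed.

Lemma is_lim_U_formula_add_ln (a b : R) : 0 < a -> a < b ->
  is_lim (fun x => U_formula a b x + / 4 * (sqrt b - sqrt a) ^ 2 * ln x) p_infty 0.
Proof.
  intros ha hab.
  apply (is_lim_ext_loc (fun x => U_formula_at_inv a b (/ x))).
  { exists b. intros x Hx. symmetry. apply U_formula_add_ln; lra. }
  rewrite <- (U_formula_at_inv_0 a b ha hab).
  apply (is_lim_comp _ Rinv p_infty _ 0).
  - apply is_lim_continuity, continuity_pt_filterlim, continuous_U_formula_at_inv_0; auto.
  - apply (is_lim_inv (fun y => y) p_infty p_infty); [apply is_lim_id | discriminate].
  - exists 0. intros x Hx HH. injection HH. apply Rinv_neq_0_compat. lra.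
Qed.

Theorem lemma4p4 (a b : R) (ha : 0 < a) (hab : a < b) :
  RInt (mu_density a b) a b = / 4 * (sqrt b - sqrt a) ^ 2
  /\ is_lim (fun x => U_mu a b x + / 4 * (sqrt b - sqrt a) ^ 2 * ln x)
            p_infty 0
  /\ (forall x : R, b <= x ->
        U_mu a b x = - / 2 * (x - sqrt (a * b) * ln x) + C_mu a b
                     + / 2 * RInt (fun t => sqrt ((t - a) * (t - b)) / t) b x).
Proof.
  split; [apply RInt_mu_density; auto |].
  split; [apply is_lim_U_mu_add_ln; auto |].
  assert (Hgt : forall x, b < x -> U_mu a b x = U_formula a b x).
  { apply (eq_of_is_derive_eq_is_lim _ _ (fun x => / 4 * (sqrt b - sqrt a) ^ 2 * ln x)
             (fun x => - (x - sqrt (a * b) - sqrt ((x - a) * (x - b))) / (2 * x))).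
    - intros x Hx. apply is_derive_U_mu; auto.
    - intros x Hx. apply is_derive_U_formula; auto.
    - apply is_lim_U_mu_add_ln; auto.
    - apply is_lim_U_formula_add_ln; auto. }
  intros x Hx. change (U_mu a b x = U_formula a b x).
  destruct (Rle_lt_or_eq_dec b x Hx) as [Hbx | <-]; [auto |].
  apply eq_of_at_right_limits; auto.
  - apply U_mu_right_continuous_right_end; auto.
  - apply (filterlim_filter_le_1 (F := locally b)); [apply filter_le_within |].
    apply continuous_U_formula; lra.
Qed.
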